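(* Suppose the data are generated from the uncontaminated causal invertible VARMA model $\phi_0(L)x_t=\theta_0(L)\varepsilon_t$. Let $H_T\subset\{1,\dots,T\}$ be a (possibly data-dependent) retained subset, let $\kappa\ge 0$ be an integer, and let $\hat\varphi_T(\cdot)$ be the minimiser over $\mathcal V$ of the residual-based criterion $f_T(\varphi,\cdot)$. Assume: (A1, local optimisation stability) there is an open set $\mathcal N\subset\mathcal V$ such that, with probability tending to one as $T\to\infty$: (i) there exists $\delta>0$ with $\inf_{\varphi\notin\mathcal N}f_T(\varphi,H_T)\ge\inf_{\varphi\in\mathcal N}f_T(\varphi,H_T)+\delta$; and (ii) for every $\varepsilon>0$ there exists $\eta_\varepsilon>0$ with $\inf_{\varphi\in\mathcal N,\ \|\varphi-\hat\varphi_T(H_T)\|\ge\varepsilon}f_T(\varphi,H_T)\ge f_T(\hat\varphi_T(H_T),H_T)+\eta_\varepsilon$; (A2, stability under patch removal) $\sup_{\varphi\in\mathcal V}|f_T(\varphi,H_T)-f_T(\varphi,S^\kappa H_T)|\to 0$ in probability. Then, with probability tending to one, on the same open set $\mathcal N$: (i) there exists $\delta'>0$ with $\inf_{\varphi\notin\mathcal N}f_T(\varphi,S^\kappa H_T)\ge\inf_{\varphi\in\mathcal N}f_T(\varphi,S^\kappa H_T)+\delta'$; (ii) for every $\varepsilon>0$ there exists $\eta'_\varepsilon>0$ with $\inf_{\varphi\in\mathcal N,\ \|\varphi-\hat\varphi_T(S^\kappa H_T)\|\ge\varepsilon}f_T(\varphi,S^\kappa H_T)\ge f_T(\hat\varphi_T(S^\kappa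 H_T),S^\kappa H_T)+\eta'_\varepsilon$. Furthermore, $$(K^\kappa\hat\varphi_T)(H_T)-\hat\varphi_T(H_T)\overset{p}{\longrightarrow}0.$$ If instead $\hat\varphi_T$ is a maximiser of the criterion, the same statement holds with every infimum replaced by a supremum and every inequality of the form ''$\ge\ \cdot+c$'' replaced by ''$\le\ \cdot-c$'', in both the hypotheses and the conclusions.
   Context: Setting: $\{x_t\}$ is a $d$-dimensional mean-zero process with $\phi_0(L)x_t=\theta_0(L)\varepsilon_t$ (VARMA$(p,q)$), $\varepsilon_t$ zero-mean innovations. The parameter space $\mathcal V$ consists of $\varphi=(\phi,\theta)$ for which the model is causal and invertible; $\varphi_0=(\phi_0,\theta_0)\in\mathcal V$. For $\varphi\in\mathcal V$, $e_t(\varphi)=\theta^{-1}(L)\phi(L)x_t$ is the residual, so $e_t(\varphi_0)=\varepsilon_t$. For a subset $H\subset\{1,\dots,T\}$, the sample criterion is $f_T(\varphi,H)=g_T(\{e_t(\varphi):t\in H\})$ for some function $g_T$ (it depends on $\varphi$ only through these residuals), and $\hat\varphi_T(H)$ denotes an exact optimiser of $f_T(\cdot,H)$ over $\mathcal V$. Patch removal: with $H_T^c=\{1,\dots,T\}\setminus H_T$, $S^\kappa H_T=H_T\setminus\bigcup_{t\in H_T^c}\{t+1,\dots,\min(t+\kappa,T)\}$, and the patch removal operator acts on estimators by $(K^\kappa\hat\varphi_T)(H_T)=\hat\varphi_T(S^\kappa H_T)$. $\kappa$ may depend on $T$. *)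

From HB Require Import structures.
From mathcomp Require Import all_boot all_order all_algebra.
From mathcomp Require Import all_classical all_reals all_analysis.
From mathcomp Require Import complex.
Import Order.TTheory GRing.Theory Num.Theory.
Import numFieldNormedType.Exports.

Set Implicit Arguments.
Unset Strict Implicit.
Unset Printing Implicit Defensive.

Local Open Scope ring_scope.
Local Open Scope classical_set_scope.

Section VARMA.
Variables (R : realType) (d p q : nat).

(* A parameter varphi = (phi, theta) is stored as the d x (p*d + q*d) matrix
   [Phi_1 ... Phi_p | Theta_1 ... Theta_q]; its norm is the library's
   (max-entry) matrix norm. *)
Definition param := 'M[R]_(d, p * d + q * d).

(* Phi_{k+1}, k : 'I_p *)
Definition ar_coef (phi : param) (k : 'I_p) : 'M[R]_d :=
  \matrix_(i < d, j < d) phi i (lshift (q * d) (mxvec_index k j)).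
(* Theta_{k+1}, k : 'I_q *)
Definition ma_coef (phi : param) (k : 'I_q) : 'M[R]_d :=
  \matrix_(i < d, j < d) phi i (rshift (p * d) (mxvec_index k j)).

Definition ar_poly_at (phi : param) (z : R[i]) : 'M[R[i]]_d :=
  1%:M - \sum_(k < p) z ^+ k.+1 *: map_mx (real_complex R) (ar_coef phi k).
Definition ma_poly_at (phi : param) (z : R[i]) : 'M[R[i]]_d :=
  1%:M + \sum_(k < q) z ^+ k.+1 *: map_mx (real_complex R) (ma_coef phi k).

Definition causal (phi : param) : Prop :=
  forall z : R[i], `|z| <= 1 -> \det (ar_poly_at phi z) != 0.
Definition invertible (phi : param) : Prop :=
  forall z : R[i], `|z| <= 1 -> \det (ma_poly_at phi z) != 0.

Definition param_space : set param := [set phi | causal phi /\ invertible phi].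

Definition ar_filter (phi : param) (x : int -> 'cV[R]_d) (t : int) : 'cV[R]_d :=
  x t - \sum_(k < p) ar_coef phi k *m x (t - (k.+1)%:Z).
Definition ma_filter (phi : param) (e : int -> 'cV[R]_d) (t : int) : 'cV[R]_d :=
  e t + \sum_(k < q) ma_coef phi k *m e (t - (k.+1)%:Z).

(* coefficients Psi_k of the power series theta^{-1}(z) = sum_k Psi_k z^k:
   Psi_0 = I, Psi_k = - sum_{j=1}^{min(k,q)} Theta_j Psi_{k-j} *)
Fixpoint psi_upto (phi : param) (n : nat) : nat -> 'M[R]_d :=
  match n with
  | 0 => fun k => if k == 0%N then 1%:M else 0
  | n'.+1 => let f := psi_upto phi n' in
      fun k => if k == n'.+1 then
                 - \sum_(m < q | (m < n'.+1)%N) ma_coef phi m *m f (n' - m)%N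
               else f k
  end.
Definition ma_inv_coef (phi : param) (k : nat) : 'M[R]_d := psi_upto phi k k.

(* residual e_t(varphi) = theta^{-1}(L) phi(L) x_t *)
Definition residual (phi : param) (x : int -> 'cV[R]_d) (t : int) : 'cV[R]_d :=
  lim ((fun n : nat => \sum_(k < n) ma_inv_coef phi k *m ar_filter phi x (t - k%:Z))
         @ \oo).

(* sample criterion f_T(varphi, H) = g_T({e_t(varphi) : t in H}); the indexed
   family {e_t : t in H} is passed to g_T as (H, t |-> e_t masked outside H). *)
Definition criterion (g : nat -> set nat -> (nat -> 'cV[R]_d) -> R)
  (x : int -> 'cV[R]_d) (T : nat) (phi : param) (H : set nat) : R :=
  g T H (fun t : nat => if `[< H t >] then residual phi x t%:Z else 0).

End VARMA.

Definition obs_range (T : nat) : set nat := [set t | (1 <= t <= T)%N].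

Definition patch_remove (T kappa : nat) (H : set nat) : set nat :=
  [set t | H t /\
     ~ (exists s, (1 <= s <= T)%N /\ ~ H s /\ (s < t <= minn (s + kappa) T)%N)].

Definition Kop {A : Type} (kappa : nat -> nat) (est : nat -> set nat -> A)
  : nat -> set nat -> A :=
  fun T H => est T (patch_remove T (kappa T) H).

Section Prob.
Variables (R : realType) (dO : measure_display) (Omega : measurableType dO)
  (P : probability Omega R).

(* "with probability tending to one, A_T holds": there are events
   E_T contained in A_T with P(E_T) -> 1 (inner probability, so that no
   measurability of A_T is presupposed). *)
Definition wptto (A : nat -> set Omega) : Prop :=
  exists E : nat -> set Omega,
    (forall T, measurable (E T)) /\ (forall T, E T `<=` A T) /\
    ((fun T => P (E T)) @ \oo --> 1%E).

Definition cvg_in_prob0 {V : normedModType R} (X : nat -> Omega -> V) : Prop :=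
  forall e : R, 0 < e -> wptto (fun T => [set w | `|X T w| < e]).

Definition varma_dgp (d p q : nat) (x eps : int -> Omega -> 'cV[R]_d)
  (phi0 : param R d p q) : Prop :=
  param_space phi0 /\
  (forall w t, ar_filter phi0 (fun s => x s w) t = ma_filter phi0 (fun s => eps s w) t) /\
  (forall t (i : 'I_d), P.-integrable setT (fun w => (x t w i ord0)%:E) /\
                        ('E_P[fun w => x t w i ord0] = 0)%E) /\
  (forall t (i : 'I_d), P.-integrable setT (fun w => (eps t w i ord0)%:E) /\
                        ('E_P[fun w => eps t w i ord0] = 0)%E).

Variables (Par : normedModType R).

Definition is_minimiser (V : set Par) (F : nat -> Par -> set nat -> Omega -> R)
  (est : nat -> set nat -> Omega -> Par) : Prop :=
  forall T H w, H `<=` obs_range T ->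
    V (est T H w) /\ forall phi, V phi -> (F T (est T H w) H w <= F T phi H w).
Definition is_maximiser (V : set Par) (F : nat -> Par -> set nat -> Omega -> R)
  (est : nat -> set nat -> Omega -> Par) : Prop :=
  forall T H w, H `<=` obs_range T ->
    V (est T H w) /\ forall phi, V phi -> (F T phi H w <= F T (est T H w) H w).

Definition loc_stab_min (V N : set Par) (F : nat -> Par -> set nat -> Omega -> R)
  (est : nat -> set nat -> Omega -> Par) (Hs : nat -> Omega -> set nat) : Prop :=
  (exists2 delta : R, 0 < delta &
     wptto (fun T => [set w |
       (ereal_inf [set (F T phi (Hs T w) w)%:E | phi in V `\` N]
        >= ereal_inf [set (F T phi (Hs T w) w)%:E | phi in N] + delta%:E)%E])) /\
  (forall e : R, 0 < e -> exists2 eta : R, 0 < eta &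
     wptto (fun T => [set w |
       (ereal_inf [set (F T phi (Hs T w) w)%:E
                    | phi in [set phi | N phi /\ (e <= `|phi - est T (Hs T w) w|)%R]]
        >= (F T (est T (Hs T w) w) (Hs T w) w + eta)%:E)%E])).

Definition loc_stab_max (V N : set Par) (F : nat -> Par -> set nat -> Omega -> R)
  (est : nat -> set nat -> Omega -> Par) (Hs : nat -> Omega -> set nat) : Prop :=
  (exists2 delta : R, 0 < delta &
     wptto (fun T => [set w |
       (ereal_sup [set (F T phi (Hs T w) w)%:E | phi in V `\` N]
        <= ereal_sup [set (F T phi (Hs T w) w)%:E | phi in N] - delta%:E)%E])) /\
  (forall e : R, 0 < e -> exists2 eta : R, 0 < eta &
     wptto (fun T => [set w |
       (ereal_sup [set (F T phi (Hs T w) w)%:E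
                    | phi in [set phi | N phi /\ (e <= `|phi - est T (Hs T w) w|)%R]]
        <= (F T (est T (Hs T w) w) (Hs T w) w - eta)%:E)%E])).

Definition patch_stable (V : set Par) (F : nat -> Par -> set nat -> Omega -> R)
  (kappa : nat -> nat) (Hs : nat -> Omega -> set nat) : Prop :=
  forall e : R, 0 < e -> wptto (fun T => [set w |
    (ereal_sup [set (`|F T phi (Hs T w) w
                       - F T phi (patch_remove T (kappa T) (Hs T w)) w|)%:E
                | phi in V] < e%:E)%E]).

End Prob.

From HB Require Import structures.
From mathcomp Require Import all_boot all_order all_algebra.
From mathcomp Require Import all_classical all_reals all_analysis.
From mathcomp Require Import complex.
From mathcomp Require Import ring lra.
Import Order.TTheory GRing.Theory Num.Theory.
Import numFieldNormedType.Exports.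
Local Open Scope ring_scope.
Local Open Scope classical_set_scope.

(* The argument is deterministic. On the event where
   sup_V |F(., H_T) - F(., S^kappa H_T)| < e, the two criteria are uniformly
   e-close, so the separation gap and the sharpness margin of the criterion
   for H_T survive for S^kappa H_T up to a loss of 2e; and once 2e is below
   both the gap and the margin at radius eps, the minimiser for S^kappa H_T
   cannot lie at distance >= eps from the one for H_T. Each conclusion thus
   holds on a finite intersection of events of probability tending to one. *)

Section UniformlyCloseCriteria.
Context {R : realType} {Par : normedModType R} {V : set Par} {f g : Par -> R} {e : R}.
Hypothesis fg_close : forall phi, V phi -> `|f phi - g phi| < e.

Let fg_bounds {phi} : V phi -> f phi - e < g phi < f phi + e.
Proof. by move/fg_close; rewrite ltr_distlC. Qed.

Lemma gap_perturb {N : set Par} {delta : R} : N `<=` V ->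
  (ereal_inf [set (f phi)%:E | phi in N] + delta%:E
     <= ereal_inf [set (f phi)%:E | phi in V `\` N])%E ->
  (ereal_inf [set (g phi)%:E | phi in N] + (delta - 2 * e)%:E
     <= ereal_inf [set (g phi)%:E | phi in V `\` N])%E.
Proof.
move=> NV gap.
set a := ereal_inf [set (f phi)%:E | phi in N].
set b := ereal_inf [set (g phi)%:E | phi in N].
have ba : (b - e%:E <= a)%E.
  apply: le_ereal_inf_tmp => _ [psi Npsi <-]; rewrite leeBlDr //.
  apply: le_trans (ereal_inf_lbound _) _; first by exists psi.
  by have /andP[_ /ltW] := fg_bounds (NV _ Npsi); rewrite -EFinD lee_fin.
apply: le_ereal_inf_tmp => _ [phi [Vphi nNphi] <-].
have fphi : (a + delta%:E <= (f phi)%:E)%E.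
  by apply: le_trans gap (ereal_inf_lbound _); exists phi.
have -> : (b + (delta - 2 * e)%:E = b - e%:E + delta%:E - e%:E)%E.
  by rewrite -!addeA -!EFinN -!EFinD; congr (_ + _%:E)%E; lra.
rewrite leeBlDr //; apply: le_trans (leeD2r _ ba) _.
apply: le_trans fphi _.
by have /andP[/ltW] := fg_bounds Vphi; rewrite -EFinD lee_fin lerBlDr.
Qed.

Lemma argmin_perturb_near {N : set Par} {h s : Par} {delta eta eps : R} :
  V h -> V s -> (forall phi, N phi -> f h <= f phi) -> g s <= g h ->
  2 * e <= delta -> 2 * e <= eta ->
  (ereal_inf [set (f phi)%:E | phi in N] + delta%:E
     <= ereal_inf [set (f phi)%:E | phi in V `\` N])%E ->
  ((f h + eta)%:E
     <= ereal_inf [set (f phi)%:E | phi in [set phi | N phi /\ (eps <= `|phi - h|)%R]])%E ->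
  `|s - h| < eps.
Proof.
move=> Vh Vs h_min s_min e_delta e_eta gap sharp.
have fs_lt : f s < f h + 2 * e.
  by have /andP[? ?] := fg_bounds Vs; have /andP[? ?] := fg_bounds Vh; lra.
rewrite ltNge; apply/negP => far.
have [Ns | nNs] := pselect (N s).
  have : ((f h + eta)%:E <= (f s)%:E)%E.
    by apply: le_trans sharp (ereal_inf_lbound _); exists s.
  by rewrite lee_fin; lra.
have : ((f h + delta)%:E <= (f s)%:E)%E.
  apply: le_trans (le_trans _ gap) (ereal_inf_lbound _); last by exists s.
  rewrite EFinD leeD2r //; apply: le_ereal_inf_tmp => _ [phi Nphi <-].
  by rewrite lee_fin h_min.
by rewrite lee_fin; lra.
Qed.

Lemma sharpness_perturb {N : set Par} {h s : Par} {eta eps : R} :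
  N `<=` V -> V h -> g s <= g h -> `|s - h| < eps / 2 ->
  ((f h + eta)%:E
     <= ereal_inf [set (f phi)%:E | phi in [set phi | N phi /\ (eps / 2 <= `|phi - h|)%R]])%E ->
  ((g s + (eta - 2 * e))%:E
     <= ereal_inf [set (g phi)%:E | phi in [set phi | N phi /\ (eps <= `|phi - s|)%R]])%E.
Proof.
move=> NV Vh s_min near sharp.
apply: le_ereal_inf_tmp => _ [phi [Nphi far] <-].
have far_h : eps / 2 <= `|phi - h|.
  by have := ler_distD h phi s; rewrite (distrC h s); lra.
have : ((f h + eta)%:E <= (f phi)%:E)%E.
  by apply: le_trans sharp (ereal_inf_lbound _); exists phi.
rewrite !lee_fin.
by have /andP[? ?] := fg_bounds (NV _ Nphi); have /andP[? ?] := fg_bounds Vh; lra.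
Qed.

End UniformlyCloseCriteria.

Section ProbabilityTendingToOne.
Context {R : realType} {dO : measure_display} {Omega : measurableType dO}.
Context {P : probability Omega R}.

Lemma probability_setI_ge (A B : set Omega) : measurable A -> measurable B ->
  (P A + P B - 1 <= P (A `&` B))%E.
Proof.
move=> mA mB; rewrite leeBlDr // (measureDI P mA mB) -addeA.
rewrite [P (A `&` B) + _]addeC addeA [X in (_ <= X)%E]addeC; apply: leeD2r.
have mAB : measurable (A `\` B) by exact: measurableD.
rewrite -measureU //; first exact/probability_le1/measurableU.
by rewrite setDE -setIA setICl setI0.
Qed.

Lemma wptto_sub {A B : nat -> set Omega} :
  wptto P A -> (forall T, A T `<=` B T) -> wptto P B.
Proof.
move=> [E [mE [EA PE]]] AB; exists E; split=> //; split=> // T.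
exact: subset_trans (EA T) (AB T).
Qed.

Lemma wpttoI {A B : nat -> set Omega} :
  wptto P A -> wptto P B -> wptto P (fun T => A T `&` B T).
Proof.
move=> [E1 [mE1 [E1A PE1]]] [E2 [mE2 [E2B PE2]]].
have mE12 T : measurable (E1 T `&` E2 T) by exact: measurableI.
exists (fun T => E1 T `&` E2 T); split=> //; split; first by move=> T w [/E1A ? /E2B ?].
apply: (@squeeze_cvge _ _ _ _ (fun T => P (E1 T) + P (E2 T) - 1)%E _ (cst 1%E)).
- apply: nearW => T; rewrite probability_setI_ge //=.
  exact: probability_le1.
- have := cvgeB _ (cvgeD _ PE1 PE2) (cvg_cst (1%E : \bar R)).
  by rewrite /= -EFinD -EFinB addrK; apply.
- exact: cvg_cst.
Qed.

End ProbabilityTendingToOne.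

Lemma patch_remove_sub (T kappa : nat) (H : set nat) : patch_remove T kappa H `<=` H.
Proof. by move=> t []. Qed.

Section PatchRemovalMinimiser.
Context {R : realType} {dO : measure_display} {Omega : measurableType dO}.
Context {P : probability Omega R} {Par : normedModType R} {V N : set Par}.
Context {F : nat -> Par -> set nat -> Omega -> R} {est : nat -> set nat -> Omega -> Par}.
Context {Hs : nat -> Omega -> set nat} {kappa : nat -> nat}.
Hypotheses (Hs_obs : forall T w, Hs T w `<=` obs_range T) (NV : N `<=` V).
Hypotheses (est_min : is_minimiser V F est) (stab : loc_stab_min P V N F est Hs).
Hypothesis patch_stab : patch_stable P V F kappa Hs.

Let SHs T w := patch_remove T (kappa T) (Hs T w).

Let F_close {T w e} :
  (ereal_sup [set (`|F T phi (Hs T w) w - F T phi (SHs T w) w|)%:E | phi in V]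
     < e%:E)%E ->
  forall phi, V phi -> `|F T phi (Hs T w) w - F T phi (SHs T w) w| < e.
Proof.
by move=> sup_lt phi Vphi; rewrite -lte_fin; apply: le_lt_trans sup_lt;
  apply: ereal_sup_ubound; exists phi.
Qed.

Let est_min_H T w := est_min T _ w (Hs_obs T w).
Let est_min_SH T w :=
  est_min T (SHs T w) w (subset_trans (patch_remove_sub _ _ _) (Hs_obs T w)).

Lemma patch_remove_est_cvg :
  cvg_in_prob0 P (fun T w => Kop kappa est T (Hs T w) w - est T (Hs T w) w).
Proof.
move=> eps eps_gt0; have [[delta delta_gt0 gap] sharp] := stab.
have [eta eta_gt0 sharp_eps] := sharp eps eps_gt0.
pose e : R := Num.min delta eta / 2.
have e_gt0 : 0 < e by rewrite divr_gt0 // lt_min delta_gt0.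
have [e_delta e_eta] : 2 * e <= delta /\ 2 * e <= eta.
  by split; rewrite /e mulrC divfK // ge_min lexx ?orbT.
apply: (wptto_sub (wpttoI (wpttoI gap sharp_eps) (patch_stab _ e_gt0))).
move=> T w [[gapw sharpw] closew] /=.
have [Vh h_min] := est_min_H T w; have [Vs s_min] := est_min_SH T w.
have h_minN phi : N phi -> F T (est T (Hs T w) w) (Hs T w) w <= F T phi (Hs T w) w.
  by move/NV; exact: h_min.
exact: (argmin_perturb_near (F_close closew) Vh Vs h_minN (s_min _ Vh)
  e_delta e_eta gapw sharpw).
Qed.

Lemma loc_stab_min_patch_remove : loc_stab_min P V N F est SHs.
Proof.
have [[delta delta_gt0 gap] sharp] := stab; split.
  exists (delta / 2); first by rewrite divr_gt0.
  have delta4_gt0 : 0 < delta / 4 by rewrite divr_gt0.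
  apply: (wptto_sub (wpttoI gap (patch_stab _ delta4_gt0))) => T w [gapw closew] /=.
  have -> : delta / 2 = delta - 2 * (delta / 4) by field.
  exact: (gap_perturb (F_close closew) NV gapw).
move=> eps eps_gt0; have eps2_gt0 : 0 < eps / 2 by rewrite divr_gt0.
have [eta eta_gt0 sharp_eps] := sharp _ eps2_gt0.
exists (eta / 2); first by rewrite divr_gt0.
have eta4_gt0 : 0 < eta / 4 by rewrite divr_gt0.
apply: (wptto_sub (wpttoI (wpttoI sharp_eps (patch_stab _ eta4_gt0))
                     (patch_remove_est_cvg _ eps2_gt0))) => T w [[sharpw closew] near] /=.
have [Vh _] := est_min_H T w; have [Vs s_min] := est_min_SH T w.
have -> : eta / 2 = eta - 2 * (eta / 4) by field.
exact: (sharpness_perturb (F_close closew) NV Vh (s_min _ Vh) near sharpw).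
Qed.

End PatchRemovalMinimiser.

Section OppositeCriterion.
Context {R : realType} {Par : Type}.
Local Open Scope ereal_scope.

Lemma ereal_inf_EFinN (A : set Par) (u : Par -> R) :
  ereal_inf [set (- u phi)%:E | phi in A] = - ereal_sup [set (u phi)%:E | phi in A].
Proof.
rewrite /ereal_inf image_comp; congr (- ereal_sup _).
by apply: eq_imagel => phi _ /=; rewrite opprK.
Qed.

Lemma ereal_sup_le_gapN (A B : set Par) (u : Par -> R) (delta : R) :
  (ereal_sup [set (u phi)%:E | phi in A] <= ereal_sup [set (u phi)%:E | phi in B] - delta%:E)
  = (ereal_inf [set (- u phi)%:E | phi in B] + delta%:E
       <= ereal_inf [set (- u phi)%:E | phi in A]).
Proof. by rewrite !ereal_inf_EFinN -leeN2 oppeB //; case: ereal_sup. Qed.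

Lemma ereal_sup_le_marginN (A : set Par) (u : Par -> R) (a eta : R) :
  (ereal_sup [set (u phi)%:E | phi in A] <= (a - eta)%:E)
  = ((- a + eta)%:E <= ereal_inf [set (- u phi)%:E | phi in A]).
Proof. by rewrite ereal_inf_EFinN -leeN2 -EFinN opprB addrC. Qed.

End OppositeCriterion.

Section Maximiser.
Context {R : realType} {dO : measure_display} {Omega : measurableType dO}.
Context {P : probability Omega R} {Par : normedModType R} {V N : set Par}.
Context {F : nat -> Par -> set nat -> Omega -> R} {est : nat -> set nat -> Omega -> Par}.

Let negF T phi H w := - F T phi H w.

Lemma is_maximiser_oppr : is_maximiser V F est -> is_minimiser V negF est.
Proof.
move=> est_max T H w H_obs; have [Vest est_ge] := est_max T H w H_obs.
by split=> // phi Vphi; rewrite lerN2 est_ge.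
Qed.

Lemma patch_stable_oppr {kappa Hs} :
  patch_stable P V F kappa Hs -> patch_stable P V negF kappa Hs.
Proof.
move=> stab e e_gt0; apply: (wptto_sub (stab e e_gt0)) => T w /=.
apply: le_lt_trans; apply: ereal_sup_le => _ [phi Vphi <-]; exists phi => //.
by rewrite /negF -opprD normrN.
Qed.

Lemma loc_stab_max_oppr {Hs} :
  loc_stab_max P V N F est Hs <-> loc_stab_min P V N negF est Hs.
Proof.
split=> -[[delta delta_gt0 gap] sharp]; split=> [|eps /sharp[eta eta_gt0 sharp_eps]].
1,3: by exists delta => //; apply: (wptto_sub gap) => T w /=; rewrite ereal_sup_le_gapN.
all: by exists eta => //; apply: (wptto_sub sharp_eps) => T w /=; rewrite ereal_sup_le_marginN.
Qed.

End Maximiser.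

Theorem theorem1 (R : realType) (d p q : nat)
  (dO : measure_display) (Omega : measurableType dO) (P : probability Omega R)
  (x eps : int -> Omega -> 'cV[R]_d) (phi0 : param R d p q)
  (g : nat -> set nat -> (nat -> 'cV[R]_d) -> R)
  (Hs : nat -> Omega -> set nat) (kappa : nat -> nat)
  (N : set (param R d p q)) :
  varma_dgp P x eps phi0 ->
  (forall T w, Hs T w `<=` obs_range T) ->
  open N -> N `<=` @param_space R d p q ->
  let F := fun T phi H w => criterion g (fun s => x s w) T phi H in
  let SHs := fun T w => patch_remove T (kappa T) (Hs T w) in
  (forall est : nat -> set nat -> Omega -> param R d p q,
     is_minimiser (@param_space R d p q) F est ->
     loc_stab_min P (@param_space R d p q) N F est Hs ->
     patch_stable P (@param_space R d p q) F kappa Hs ->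
     loc_stab_min P (@param_space R d p q) N F est SHs /\
     cvg_in_prob0 P (fun T w => Kop kappa est T (Hs T w) w - est T (Hs T w) w))
  /\
  (forall est : nat -> set nat -> Omega -> param R d p q,
     is_maximiser (@param_space R d p q) F est ->
     loc_stab_max P (@param_space R d p q) N F est Hs ->
     patch_stable P (@param_space R d p q) F kappa Hs ->
     loc_stab_max P (@param_space R d p q) N F est SHs /\
     cvg_in_prob0 P (fun T w => Kop kappa est T (Hs T w) w - est T (Hs T w) w)).
Proof.
move=> _ Hs_obs _ NV F SHs; split=> est est_opt stab patch_stab.
  split; first exact: loc_stab_min_patch_remove Hs_obs NV est_opt stab patch_stab.
  exact: patch_remove_est_cvg Hs_obs NV est_opt stab patch_stab.
have est_min := is_maximiser_oppr est_opt.
have stabN := loc_stab_max_oppr.1 stab.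
have patch_stabN := patch_stable_oppr patch_stab.
split; last exact: patch_remove_est_cvg Hs_obs NV est_min stabN patch_stabN.
apply/loc_stab_max_oppr.
exact: loc_stab_min_patch_remove Hs_obs NV est_min stabN patch_stabN.
Qed.
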